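(* Let $\Gamma$ be a simple graph with $n$ vertices having exactly $m$ universal vertices, where $1\leqslant m<n$. Then the number $\kappa(\Gamma)$ of spanning trees of $\Gamma$ is divisible by $n^{m-1}$.
   Context: A universal vertex of a graph is a vertex adjacent to all other vertices. *)

(* A simple graph on a finite vertex type T is a symmetric,
   irreflexive boolean relation e : rel T. *)
From mathcomp Require Import all_boot.
From mathcomp Require Import boolp.
Set Implicit Arguments. Unset Strict Implicit. Unset Printing Implicit Defensive.

Section Graphs.
Variable T : finType.

Definition graph_edges (e : rel T) : {set {set T}} :=
  [set A : {set T} | [exists x, exists y, (x != y) && e x y && (A == [set x; y])]].

Definition edge_set_rel (F : {set {set T}}) : rel T :=
  fun x y => (x != y) && ([set x; y] \in F).

Definition set_connected (F : {set {set T}}) : bool :=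
  [forall x, forall y, connect (edge_set_rel F) x y].

Definition set_acyclic (F : {set {set T}}) : Prop :=
  forall s : seq T, uniq s -> 3 <= size s -> ~~ cycle (edge_set_rel F) s.

Definition is_spanning_tree (e : rel T) (F : {set {set T}}) : Prop :=
  F \subset graph_edges e /\ set_connected F /\ set_acyclic F.

Definition num_spanning_trees (e : rel T) : nat :=
  #|[set F : {set {set T}} | `[< is_spanning_tree e F >]]|.

Definition universal (e : rel T) (v : T) : bool :=
  [forall w, (w != v) ==> e v w].

End Graphs.

From mathcomp Require Import all_boot fingroup perm.
From mathcomp Require Import boolp zify.
Set Implicit Arguments. Unset Strict Implicit. Unset Printing Implicit Defensive.

(* Fix a universal vertex u.  Spanning trees correspond to parent maps in which
   every vertex other than u points to a neighbour and every orbit ends at u.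
   More generally, let F(D, C) be the set of maps in which every vertex of D
   points to a neighbour in D or to an arbitrary vertex of a disjoint set C, and
   every orbit starting in D ends in C.  Transposing two vertices of C permutes
   F(D, C), so all vertices of C are final roots equally often and |C| divides
   |F(D, C)| when D is nonempty.  Moving a vertex v adjacent to all of D from D
   into C gives
     (|C| + 1) |F(D, C)| = |C| (|C| + |D|) |F(D - v, C + v)|
   by cutting the arrow out of v and counting where it may be reattached, and
   |C| + |D| does not change.  Starting from D = T - u, C = {u}, so that
   |C| + |D| = n, and moving the m - 1 other universal vertices one at a time
   gives n^(m-1) | kappa. *)

Section Iterates.
Variable T : finType.
Implicit Types (f g : T -> T) (C : {set T}).

Lemma iter_card_in_fixed C f k w :
  {in C, forall c, f c = c} -> iter k f w \in C -> iter #|T| f w \in C.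
Proof.
move=> fixC hk.
have hc : fconnect f w (iter k f w) := fconnect_iter f k w.
have le_T : findex f w (iter k f w) <= #|T|.
  exact: ltnW (leq_trans (findex_max hc) (max_card _)).
by rewrite -(subnK le_T) iterD iter_findex // iter_fix // fixC.
Qed.

Lemma iter_first_hit f g (B : {set T}) k y :
  (forall z, z \notin B -> g z = f z) -> {in B, forall b, g b = b} ->
  iter k g y \in B -> exists j, iter j f y = iter k g y.
Proof.
move=> gf gB; elim: k y => [|k IH] y; first by exists 0.
rewrite iterSr; have [yB _|yNB] := boolP (y \in B).
  by exists 0; rewrite gB // [RHS]iter_fix ?gB.
by rewrite gf // => /IH [j hj]; exists j.+1; rewrite iterSr.
Qed.

Lemma periodic_iter_fixed f x n k :
  iter n.+1 f x = x -> f (iter k f x) = iter k f x -> iter k f x = x.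
Proof.
move=> per fix_k.
have per_mul j : iter (j * n.+1) f x = x.
  by elim: j => // j IH; rewrite mulSn iterD IH per.
rewrite -{2}(per_mul k) -(subnK (leq_pmulr k (ltn0Sn n))) iterD.
by symmetry; apply: iter_fix.
Qed.

Lemma iter_section_const (u : T) f g (X : pred T) :
  (forall x, X x -> X (g x) /\ f (g x) = x) -> (forall y, iter #|T| f y = u) ->
  forall x, X x -> x = u.
Proof.
move=> hg hf x Xx.
have back k : X (iter k g x) /\ iter k f (iter k g x) = x.
  elim: k => [//|k [Xk fk]]; have [X' f'] := hg _ Xk.
  by rewrite iterS iterSr f'.
by have [_ <-] := back #|T|.
Qed.

End Iterates.

Section Forests.
Variables (T : finType) (e : rel T).
Implicit Types (D C : {set T}) (p : {ffun T -> T}).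

(* After #|T| steps every orbit has reached its final cycle; for the maps in
   [forests D C] this is a fixed point in C. *)
Definition forest_root p w := iter #|T| p w.

Definition parent_map D C p : bool :=
  [forall w, if w \in D then ((p w \in D) && e w (p w)) || (p w \in C) else p w == w].

Definition rooted_in D C p : bool := [forall w in D, forest_root p w \in C].

Definition forests D C := [set p | parent_map D C p && rooted_in D C p].

Lemma parent_mapD D C p w :
  parent_map D C p -> w \in D -> ((p w \in D) && e w (p w)) || (p w \in C).
Proof. by move=> /forallP /(_ w); case: (w \in D). Qed.

Lemma parent_mapN D C p w : parent_map D C p -> w \notin D -> p w = w.
Proof. by move=> /forallP /(_ w); case: (w \in D) => // /eqP. Qed.

Lemma parent_map_fixC D C p c :
  [disjoint D & C] -> parent_map D C p -> c \in C -> p c = c.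
Proof. by move=> dDC pD cC; rewrite (parent_mapN pD) // (disjointFl dDC cC). Qed.

Lemma rooted_inP D C p w : rooted_in D C p -> w \in D -> forest_root p w \in C.
Proof. by move=> /forall_inP; apply. Qed.

Lemma forestsP D C p : p \in forests D C -> parent_map D C p /\ rooted_in D C p.
Proof. by rewrite inE => /andP. Qed.

End Forests.

Lemma mem_tperm_set (T : finType) (A : {set T}) c c' x :
  (c \in A) = (c' \in A) -> (tperm c c' x \in A) = (x \in A).
Proof. by case: tpermP => // -> ->. Qed.

Section Relabel.
Variables (T : finType) (e : rel T) (D C : {set T}) (c c' : T).
Hypotheses (dDC : [disjoint D & C]) (cC : c \in C) (c'C : c' \in C).

Definition relabel (p : {ffun T -> T}) : {ffun T -> T} :=
  [ffun w => if w \in D then tperm c c' (p w) else p w].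

Lemma relabelK : involutive relabel.
Proof. by move=> p; apply/ffunP => w; rewrite !ffunE; case: (w \in D); rewrite ?tpermK. Qed.

Let tperm_C x : (tperm c c' x \in C) = (x \in C).
Proof. by apply: mem_tperm_set; rewrite cC c'C. Qed.

Let tperm_D x : (tperm c c' x \in D) = (x \in D).
Proof. by apply: mem_tperm_set; rewrite (disjointFl dDC cC) (disjointFl dDC c'C). Qed.

Let tperm_fixD x : x \in D -> tperm c c' x = x.
Proof.
by move=> xD; apply: tpermD; apply: contraTneq xD => <-; rewrite (disjointFl dDC).
Qed.

Lemma iter_relabel p k w : parent_map e D C p ->
  iter k (relabel p) (tperm c c' w) = tperm c c' (iter k p w).
Proof.
move=> pD; elim: k => [//|k IH]; rewrite !iterS IH ffunE tperm_D.
case: ifP => [zD|/negbT zD]; first by rewrite (tperm_fixD zD).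
by rewrite !(parent_mapN pD) // tperm_D.
Qed.

Lemma relabel_forests p : p \in forests e D C -> relabel p \in forests e D C.
Proof.
move=> /forestsP [pD pR]; rewrite inE; apply/andP; split.
  apply/forallP => w; rewrite !ffunE; case wD: (w \in D).
    case/orP: (parent_mapD pD wD) => [/andP [pwD ew]|pwC].
      by rewrite tperm_fixD // pwD ew.
    by rewrite tperm_C pwC orbT.
  by rewrite (parent_mapN pD (negbT wD)).
apply/forall_inP => w wD; rewrite -(tperm_fixD wD) /forest_root iter_relabel //.
by rewrite tperm_C; apply: rooted_inP wD.
Qed.

Lemma relabel_forestsE p : (relabel p \in forests e D C) = (p \in forests e D C).
Proof. by apply/idP/idP => /relabel_forests //; rewrite relabelK. Qed.

Lemma sum_card_root_tperm (X : {set T}) : X \subset D ->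
  \sum_(p in forests e D C) #|[set w in X | forest_root p w == c']| =
  \sum_(p in forests e D C) #|[set w in X | forest_root p w == c]|.
Proof.
move=> XD; rewrite (reindex_inj (can_inj relabelK)) /=.
apply: eq_big => p; first exact: relabel_forestsE.
rewrite relabel_forestsE => /forestsP [pD _]; apply: eq_card => w; rewrite !inE.
case: (boolP (w \in X)) => //= /(subsetP XD) wD.
by rewrite -{1}(tperm_fixD wD) /forest_root iter_relabel // (canF_eq (tpermK c c')) tpermR.
Qed.

End Relabel.

Lemma card_forests_root_count (T : finType) (e : rel T) (D C X : {set T}) c :
  [disjoint D & C] -> X \subset D -> c \in C ->
  #|C| * \sum_(p in forests e D C) #|[set w in X | forest_root p w == c]| =
  #|X| * #|forests e D C|.
Proof.
move=> dDC XD cC; rewrite -sum_nat_const.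
under eq_bigr => c' c'C do rewrite -(sum_card_root_tperm e dDC cC c'C XD).
rewrite exchange_big mulnC -sum_nat_const; apply: eq_bigr => p /forestsP [_ pR].
rewrite -[#|X|]sum1_card [RHS](partition_big (forest_root p) (mem C)); last first.
  by move=> w /(subsetP XD); apply: rooted_inP.
by apply: eq_bigr => c' _; rewrite sum1_card; apply: eq_card => w; rewrite !inE.
Qed.

Lemma disjoint_setD1U1 (T : finType) (D C : {set T}) v :
  [disjoint D & C] -> [disjoint D :\ v & v |: C].
Proof.
move=> dDC; rewrite -setI_eq0; apply/eqP/setP => x; rewrite !inE.
by case: eqVneq => //= _; case xD: (x \in D); rewrite // (disjointFr dDC xD).
Qed.

Section Contract.
Variables (T : finType) (e : rel T) (D C : {set T}) (v : T).
Hypotheses (esym : symmetric e) (dDC : [disjoint D & C]) (vD : v \in D).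
Hypothesis v_univ : {in D, forall w, w != v -> e v w}.
Implicit Types (p q : {ffun T -> T}).

Local Notation D' := (D :\ v).
Local Notation C' := (v |: C).

Let vNC : v \notin C.
Proof. by rewrite (disjointFr dDC vD). Qed.

Definition cut p : {ffun T -> T} := [ffun w => if w == v then v else p w].

Definition graft q t : {ffun T -> T} := [ffun w => if w == v then t else q w].

(* Attaching v to a vertex rooted at v itself would close a cycle. *)
Definition graft_targets q := [set t | ((t \in D') || (t \in C)) && (forest_root q t != v)].

Lemma iter_cut p k w : iter k (cut p) w = iter k p w \/ iter k (cut p) w = v.
Proof.
elim: k => [|k [IH|IH]]; [by left | | by right; rewrite iterS IH ffunE eqxx].
by rewrite !iterS IH ffunE; case: eqVneq; [right | left].
Qed.

Lemma cut_forests p : p \in forests e D C -> cut p \in forests e D' C'.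
Proof.
move=> /forestsP [pD pR]; rewrite inE; apply/andP; split.
  apply/forallP => w; rewrite !ffunE !inE; case: eqVneq => [->|wv] /=; first by rewrite eqxx.
  case: (boolP (w \in D)) => [wD|wND]; last by rewrite (parent_mapN pD wND).
  by have := parent_mapD pD wD; case: eqVneq; rewrite ?orbF.
apply/forall_inP => w; rewrite !inE => /andP [_ wD].
by case: (iter_cut p #|T| w) => h; rewrite /forest_root h ?eqxx ?(rooted_inP pR wD) ?orbT.
Qed.

Lemma cut_graft_target p : p \in forests e D C -> p v \in graft_targets (cut p).
Proof.
move=> /forestsP [pD pR].
have no_cycle j : iter j.+1 p v != v.
  apply: contraTneq (rooted_inP pR vD) => per.
  by rewrite /forest_root (periodic_iter_fixed per) ?(parent_map_fixC dDC pD (rooted_inP pR vD)).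
rewrite inE; apply/andP; split.
  have := parent_mapD pD vD; rewrite !inE (no_cycle 0).
  by case: (p v \in D) => //= /orP [/andP [] | ->].
apply/negP => /eqP cut_root.
have [j hj] : exists j, iter j p (p v) = forest_root (cut p) (p v).
  apply: (@iter_first_hit _ _ _ [set v]) => [z|b|]; rewrite inE.
  - by rewrite ffunE => /negbTE ->.
  - by move=> /eqP ->; rewrite ffunE eqxx.
  - exact/eqP.
by move: (no_cycle j); rewrite iterSr hj cut_root eqxx.
Qed.

Lemma graft_parent_map q t : q \in forests e D' C' -> t \in graft_targets q ->
  parent_map e D C (graft q t).
Proof.
move=> /forestsP [qD _]; rewrite inE => /andP [tDC _].
apply/forallP => w; rewrite !ffunE; case: eqVneq => [->|wv].
  rewrite vD; case/orP: tDC => [|->]; last by rewrite orbT.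
  by rewrite !inE => /andP [tv tD]; rewrite tD v_univ.
case: (boolP (w \in D)) => [wD|wND]; last first.
  by apply/eqP/(parent_mapN qD); rewrite !inE (negbTE wND) andbF.
have wD' : w \in D' by rewrite !inE wv wD.
have := parent_mapD qD wD'; rewrite !inE.
by case: eqVneq => [->|_] //=; rewrite vD esym v_univ.
Qed.

Lemma graft_rooted q t : q \in forests e D' C' -> t \in graft_targets q ->
  rooted_in D C (graft q t).
Proof.
move=> /forestsP [qD qR]; rewrite inE => /andP [tDC troot].
set g := graft q t.
have gN z : z != v -> g z = q z by move=> zv; rewrite ffunE (negbTE zv).
have qC' : {in C', forall c, q c = c}.
  by move=> c; apply: parent_map_fixC (disjoint_setD1U1 v dDC) qD.
have gC : {in C, forall c, g c = c}.
  move=> c cC; rewrite gN ?qC' ?inE ?cC ?orbT //.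
  by apply: contraTneq cC => ->.
have g_reach z : forest_root q z \in C' -> exists j, iter j g z = forest_root q z.
  apply: iter_first_hit => // y; rewrite !inE negb_or => /andP [yv _].
  by rewrite gN.
have [k reach_v] : exists k, iter k g v \in C.
  case/orP: tDC => [tD'|tC]; last by exists 1; rewrite /= ffunE eqxx.
  have [j hj] := g_reach t (rooted_inP qR tD').
  exists j.+1; rewrite iterSr ffunE eqxx hj.
  by move: (rooted_inP qR tD'); rewrite !inE (negbTE troot).
apply/forall_inP => w wD; have [-> | wv] := eqVneq w v.
  exact: iter_card_in_fixed gC reach_v.
have wD' : w \in D' by rewrite !inE wv wD.
have [j hj] := g_reach w (rooted_inP qR wD').
have := rooted_inP qR wD'; rewrite !inE -hj => /orP [/eqP hit_v | hit_C].
  by apply: (iter_card_in_fixed (k := k + j) gC); rewrite iterD hit_v.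
exact: iter_card_in_fixed gC hit_C.
Qed.

Lemma cut_graft q t : q \in forests e D' C' -> cut (graft q t) = q.
Proof.
move=> /forestsP [qD _]; apply/ffunP => w; rewrite !ffunE.
by case: eqVneq => [->|//]; rewrite (parent_mapN qD) // !inE eqxx.
Qed.

Lemma card_forests_cut :
  #|forests e D C| = \sum_(q in forests e D' C') #|graft_targets q|.
Proof.
rewrite -sum1_card (partition_big cut (mem (forests e D' C'))) /=; last first.
  by move=> p; apply: cut_forests.
apply: eq_bigr => q qF; rewrite sum1_card.
have graft_inj : injective (graft q) by move=> t1 t2 /ffunP /(_ v); rewrite !ffunE eqxx.
rewrite -(card_imset _ graft_inj); apply: eq_card => p; rewrite unfold_in /=.
apply/andP/imsetP => [[pF /eqP <-] | [t tT ->]].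
  exists (p v); first exact: cut_graft_target.
  by apply/ffunP => w; rewrite !ffunE; case: eqVneq => [->|].
by rewrite inE graft_parent_map ?graft_rooted ?cut_graft.
Qed.

Lemma card_graft_targets q : q \in forests e D' C' ->
  #|graft_targets q| + #|[set w in D' | forest_root q w == v]| = #|D'| + #|C|.
Proof.
move=> /forestsP [qD _].
have rootC c : c \in C -> forest_root q c = c.
  move=> cC; rewrite /forest_root iter_fix //.
  by rewrite (parent_map_fixC (disjoint_setD1U1 v dDC) qD) // inE cC orbT.
have -> : graft_targets q = [set w in D' | forest_root q w != v] :|: C.
  apply/setP => t; rewrite !inE; case: (boolP (t \in C)) => tC; rewrite ?orbF ?orbT //=.
  by rewrite rootC //; apply: contraTneq tC => ->.
rewrite cardsU (_ : _ :&: C = set0) ?cards0 ?subn0; last first.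
  apply/setP => t; rewrite !inE; case: (boolP (t \in C)) => tC; rewrite ?andbF //.
  by rewrite (disjointFl dDC tC) !andbF.
rewrite addnAC; congr (_ + _).
rewrite -(cardsID [set w | forest_root q w == v] D') addnC.
by congr (_ + _); apply: eq_card => w; rewrite !inE andbC.
Qed.

Lemma card_forests_contract :
  (#|C| + 1) * #|forests e D C| = #|C| * (#|C| + #|D|) * #|forests e D' C'|.
Proof.
have root_count := card_forests_root_count e (disjoint_setD1U1 v dDC) (subxx D') (setU11 v C).
have fiber_sum : #|forests e D C| +
    \sum_(q in forests e D' C') #|[set w in D' | forest_root q w == v]| =
    #|forests e D' C'| * (#|D'| + #|C|).
  rewrite card_forests_cut -big_split -sum_nat_const /=.
  by apply: eq_bigr => q /card_graft_targets.
(* With N := #|D'| and S the sum in [fiber_sum], the two equations read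
   (#|C| + 1) S = N #|F'| and #|F| + S = (N + #|C|) #|F'|; eliminate S. *)
move: root_count fiber_sum; rewrite cardsU1 vNC (cardsD1 v D) vD.
nia.
Qed.

End Contract.

Lemma dvdn_card_forests (T : finType) (e : rel T) (D C : {set T}) :
  [disjoint D & C] -> D != set0 -> #|C| %| #|forests e D C|.
Proof.
move=> dDC /set0Pn [v vD]; have [C0|[c cC]] := set_0Vmem C.
  suff -> : forests e D C = set0 by rewrite cards0 dvdn0.
  apply/setP => p; rewrite in_set0; apply/negP => /forestsP [_ pR].
  by have := rooted_inP pR vD; rewrite C0 inE.
have vD1 : [set v] \subset D by rewrite sub1set.
have := card_forests_root_count e dDC vD1 cC; rewrite cards1 mul1n => <-.
exact: dvdn_mulr.
Qed.

Lemma dvdn_card_forests_universal (T : finType) (e : rel T) (D C S : {set T}) :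
  symmetric e -> [disjoint D & C] -> S \proper D ->
  {in S, forall v, {in D, forall w, w != v -> e v w}} ->
  #|C| * (#|C| + #|D|) ^ #|S| %| #|forests e D C|.
Proof.
move=> esym; move Sj: #|S| => j; elim: j S D C Sj => [|j IH] S D C Sj dDC SD S_univ.
  rewrite muln1; apply: dvdn_card_forests dDC _; apply/set0Pn.
  by have [_ [w wD _]] := properP SD; exists w.
have [v vS] : exists v, v \in S by apply/set0Pn; rewrite -card_gt0 Sj.
have vD : v \in D by apply: (subsetP (proper_sub SD)).
have cardC' : #|v |: C| = #|C| + 1 by rewrite cardsU1 (disjointFr dDC vD) addnC.
have cardDC' : #|v |: C| + #|D :\ v| = #|C| + #|D|.
  by rewrite cardC' (cardsD1 v D) vD addnA.
have /dvdnP [k hk] : (#|C| + 1) * (#|C| + #|D|) ^ j %| #|forests e (D :\ v) (v |: C)|.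
  rewrite -cardC' -cardDC'; apply: (IH (S :\ v) _ _ _ (disjoint_setD1U1 v dDC)).
  - by move: Sj; rewrite (cardsD1 v S) vS add1n => -[].
  - move: SD; rewrite !properEcard (cardsD1 v S) (cardsD1 v D) vS vD ltn_add2l.
    by case/andP => SD ->; rewrite setSD.
  - by move=> a /setD1P [_ aS] w /setD1P [_ wD]; apply: S_univ.
rewrite -(@dvdn_pmul2l (#|C| + 1)) ?addn1 // -addn1.
rewrite (card_forests_contract esym dDC vD (S_univ v vS)) hk expnS.
apply/dvdnP; exists k; move: (_ ^ j) => P; nia.
Qed.

Lemma set2_eq_cases (T : finType) (a b x y : T) :
  a != b -> [set a; b] = [set x; y] -> (a = x /\ b = y) \/ (a = y /\ b = x).
Proof.
move=> ab h.
have /set2P ax : a \in [set x; y] by rewrite -h set21.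
have /set2P bx : b \in [set x; y] by rewrite -h set22.
by move: ab; case: ax bx => -> [] ->; rewrite ?eqxx //; [left | right].
Qed.

Lemma graph_edges_rel (T : finType) (e : rel T) a b : symmetric e -> a != b ->
  [set a; b] \in graph_edges e -> e a b.
Proof.
move=> esym ab; rewrite inE => /existsP [x /existsP [y /andP [/andP [_ exy] /eqP h]]].
by case: (set2_eq_cases ab h) => [[-> ->] | [-> ->]]; rewrite // esym.
Qed.

Lemma edge_set_rel_sym (T : finType) (F : {set {set T}}) : symmetric (edge_set_rel F).
Proof. by move=> x y; rewrite /edge_set_rel eq_sym setUC. Qed.

Lemma prev_at_last (T : eqType) (a c : T) r : a \notin r -> prev_at a a c r = last c r.
Proof.
elim: r c => [|y r IH] c /=; first by rewrite eqxx.
by rewrite inE negb_or => /andP [/negbTE -> ar]; apply: IH.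
Qed.

Lemma next_neq_prev (T : eqType) (s : seq T) a :
  uniq s -> 3 <= size s -> a \in s -> next s a != prev s a.
Proof.
move=> us ss as_; have [i s' hrot] := rot_to as_.
rewrite -(next_rot i us) -(prev_rot i us) hrot.
have us' : uniq (a :: s') by rewrite -hrot rot_uniq.
have ss' : 2 <= size s' by move: ss; rewrite -(size_rot i) hrot.
case: s' hrot us' ss' => [|b [|c r]] //= _ /andP [anr /andP [bnr _]] _.
move: anr; rewrite !inE !negb_or => /andP [ab /andP [ac ar]].
rewrite eqxx (negbTE ab) (negbTE ac) prev_at_last //.
by apply: contraNneq bnr => ->; rewrite mem_last.
Qed.

Lemma acyclic_connected_sub_eq (T : finType) (e : rel T) (F F' : {set {set T}}) :
  F \subset graph_edges e -> set_acyclic F -> F' \subset F -> set_connected F' -> F = F'.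
Proof.
move=> Fsub Facyc F'F F'con; apply/eqP; rewrite eqEsubset F'F andbT.
apply/subsetP => A AF; have := subsetP Fsub A AF.
rewrite inE => /existsP [a /existsP [b /andP [/andP [ab _] /eqP hA]]]; subst A.
apply/negPn/negP => abF'.
have /connectP [s ps b_last] := forallP (forallP F'con a) b.
move: b_last; case: (shortenP ps) => s' ps' us' _ b_last.
have sub : subrel (edge_set_rel F') (edge_set_rel F).
  by move=> x y /andP [xy xyF]; rewrite /edge_set_rel xy (subsetP F'F).
apply: (negP (Facyc (a :: s') us' _)).
  case: s' ps' us' b_last => [|y [|z r]] //=.
  - by move=> _ _ ba; move: ab; rewrite ba eqxx.
  - by move=> /andP [/andP [_ ayF'] _] _ by_; move: abF'; rewrite by_ ayF'.
rewrite /= rcons_path (sub_path sub ps') -b_last /=.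
by rewrite /edge_set_rel eq_sym ab setUC.
Qed.

Section SpanningTrees.
Variables (T : finType) (e : rel T) (u : T).
Hypotheses (esym : symmetric e) (eirr : irreflexive e).
Hypothesis u_univ : forall w, w != u -> e u w.
Implicit Types (p : {ffun T -> T}).

Local Notation forests_u := (forests e [set~ u] [set u]).

Definition tree_edges p : {set {set T}} := [set [set w; p w] | w in [set~ u]].

Lemma forests_u_fix p : p \in forests_u -> p u = u.
Proof. by move=> /forestsP [pD _]; apply: (parent_mapN pD); rewrite !inE eqxx. Qed.

Lemma forests_u_adj p w : p \in forests_u -> w != u -> e w (p w).
Proof.
move=> /forestsP [pD _] wu; have wD : w \in [set~ u] by rewrite !inE.
by case/orP: (parent_mapD pD wD) => [/andP [_ ->] | /set1P ->] //; rewrite esym u_univ.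
Qed.

Lemma forests_u_root p w : p \in forests_u -> forest_root p w = u.
Proof.
move=> pF; have [_ pR] := forestsP pF; have [-> | wu] := eqVneq w u.
  by rewrite /forest_root iter_fix // forests_u_fix.
by apply/eqP; rewrite -in_set1; apply: rooted_inP pR _; rewrite !inE.
Qed.

Lemma tree_edges_relE p a b : edge_set_rel (tree_edges p) a b ->
  (a != u /\ b = p a) \/ (b != u /\ a = p b).
Proof.
case/andP => ab /imsetP [w]; rewrite !inE => wu /(set2_eq_cases ab).
by case=> [[-> ->] | [-> ->]]; [left | right].
Qed.

Lemma tree_edges_rel p w : p \in forests_u -> w != u -> edge_set_rel (tree_edges p) w (p w).
Proof.
move=> pF wu; have ew := forests_u_adj pF wu.
apply/andP; split; first by apply: contraTneq ew => <-; rewrite eirr.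
by apply/imsetP; exists w; rewrite ?inE.
Qed.

Lemma tree_edges_sub p : p \in forests_u -> tree_edges p \subset graph_edges e.
Proof.
move=> pF; apply/subsetP => A /imsetP [w]; rewrite !inE => wu ->.
have ew := forests_u_adj pF wu.
apply/existsP; exists w; apply/existsP; exists (p w); rewrite ew eqxx !andbT.
by apply: contraTneq ew => <-; rewrite eirr.
Qed.

Lemma tree_edges_connected p : p \in forests_u -> set_connected (tree_edges p).
Proof.
move=> pF.
have to_u x : connect (edge_set_rel (tree_edges p)) x u.
  rewrite -(forests_u_root x pF) /forest_root.
  elim: #|T| => [|k IH]; first exact: connect0.
  apply: connect_trans IH _; rewrite iterS.
  have [-> | xu] := eqVneq (iter k p x) u; first by rewrite forests_u_fix.
  exact/connect1/tree_edges_rel.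
apply/forallP => x; apply/forallP => y; apply: connect_trans (to_u x) _.
by rewrite (sym_connect_sym (@edge_set_rel_sym _ _)).
Qed.

Lemma tree_edges_acyclic p : p \in forests_u -> set_acyclic (tree_edges p).
Proof.
(* Two cycle edges at a cannot both be the edge {a, p a}, so a has a cycle
   neighbour g a with p (g a) = a; going backwards along g forces a = u. *)
move=> pF s us ss; apply/negP => cs.
pose g a := if p (next s a) == a then next s a else prev s a.
have g_sec a : a \in s -> g a \in s /\ p (g a) = a.
  move=> as_; rewrite /g; have [-> | hn] := eqVneq (p (next s a)) a; first by rewrite mem_next.
  split; first by rewrite mem_prev.
  have [[_ hna] | [_ h]] := tree_edges_relE (next_cycle cs as_); last by rewrite -h eqxx in hn.
  case: (tree_edges_relE (prev_cycle cs as_)) => [[_ <-] // | [_ hpa]].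
  by move: (next_neq_prev us ss as_); rewrite hna hpa eqxx.
have all_u := iter_section_const (X := fun a => a \in s) g_sec (fun y => forests_u_root y pF).
case: s us ss {cs g g_sec} all_u => [|a [|b r]] // /andP [a_notin _] _ all_u.
by move: a_notin; rewrite (all_u a) ?mem_head // (all_u b) ?inE ?eqxx ?orbT.
Qed.

Lemma tree_edges_inj : {in forests_u &, injective tree_edges}.
Proof.
(* If p x <> p' x, the edge {x, p' x} of p forces p (p' x) = x, and p' x is
   again such a point; going backwards along p' forces x = u. *)
move=> p p' pF p'F same_edges.
pose X x := (x != u) && (p x != p' x).
suff X_u x : X x -> x = u.
  apply/ffunP => x; have [-> | xu] := eqVneq x u; first by rewrite !forests_u_fix.
  by apply/eqP; apply: contraNT (xu) => pp'x; apply/eqP/X_u; rewrite /X xu pp'x.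
apply: (iter_section_const (g := p') _ (fun y => forests_u_root y pF)) => {}x /andP [xu pp'x].
have x_p'x : edge_set_rel (tree_edges p) x (p' x) by rewrite same_edges tree_edges_rel.
case: (tree_edges_relE x_p'x) => [[_ px] | [p'xu back]]; first by rewrite px eqxx in pp'x.
split; last by rewrite -back.
rewrite /X p'xu -back /=; apply/eqP => two_cycle; move/eqP: xu; apply.
have p'_root y : iter #|T| p' y = u by apply: forests_u_root.
apply: (iter_section_const (X := fun y => (y == x) || (y == p' x)) (g := p') _ p'_root).
  by move=> y /orP [] /eqP ->; rewrite -?two_cycle eqxx ?orbT.
by rewrite eqxx.
Qed.

Section ParentMap.
Variable F : {set {set T}}.
Hypotheses (Fsub : F \subset graph_edges e) (Fcon : set_connected F).

Local Notation R := (edge_set_rel F).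

Lemma exists_path_to_u v : exists k, [exists s : k.-tuple T, path R v s && (last v s == u)].
Proof.
have /connectP [s ps u_last] := forallP (forallP Fcon v) u.
by exists (size s); apply/existsP; exists (in_tuple s); rewrite /= ps -u_last eqxx.
Qed.

Definition dist_u v := ex_minn (exists_path_to_u v).

Lemma dist_u_step v : v != u -> exists y, R v y && (dist_u y < dist_u v).
Proof.
move=> vu; rewrite /dist_u.
case: ex_minnP => k /existsP [[s /= /eqP <-] /andP [ps /eqP s_last]] _.
case: s ps s_last => [_ /= vu' | y s /= /andP [Rvy ps] s_last].
  by rewrite vu' eqxx in vu.
exists y; rewrite Rvy ltnS; case: ex_minnP => k' _ min_k'.
by apply: min_k'; apply/existsP; exists (in_tuple s); rewrite /= ps s_last eqxx.
Qed.

Definition tree_parent : {ffun T -> T} :=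
  [ffun v => if v == u then u else odflt v [pick y | R v y && (dist_u y < dist_u v)]].

Lemma tree_parent_u : tree_parent u = u.
Proof. by rewrite ffunE eqxx. Qed.

Lemma tree_parent_step v : v != u -> R v (tree_parent v) && (dist_u (tree_parent v) < dist_u v).
Proof.
move=> vu; rewrite ffunE (negbTE vu); case: pickP => [y //|none].
by have [y] := dist_u_step vu; rewrite none.
Qed.

Lemma tree_parent_reach n w : dist_u w < n -> exists k, iter k tree_parent w = u.
Proof.
elim: n w => [//|n IH] w dist_w; have [-> | wu] := eqVneq w u; first by exists 0.
have /andP [_ /leq_trans /(_ dist_w) dist_pw] := tree_parent_step wu.
by have [k hk] := IH _ dist_pw; exists k.+1; rewrite iterSr.
Qed.

Lemma tree_parent_forest : tree_parent \in forests e [set~ u] [set u].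
Proof.
rewrite inE; apply/andP; split.
  apply/forallP => w; rewrite !inE.
  have [-> | wu] /= := eqVneq w u; first by rewrite tree_parent_u.
  have /andP [/andP [w_neq wpF] _] := tree_parent_step wu.
  by rewrite (graph_edges_rel esym w_neq (subsetP Fsub _ wpF)) andbT; case: eqVneq.
apply/forall_inP => w _; have [k hk] := tree_parent_reach (ltnSn (dist_u w)).
apply: (iter_card_in_fixed (k := k)); last by rewrite hk inE.
by move=> c; rewrite inE => /eqP ->; apply: tree_parent_u.
Qed.

Hypothesis Facyc : set_acyclic F.

Lemma tree_edges_parent : tree_edges tree_parent = F.
Proof.
symmetry; apply: (acyclic_connected_sub_eq Fsub Facyc).
  apply/subsetP => A /imsetP [w]; rewrite !inE => wu ->.
  by have /andP [/andP [_ ->] _] := tree_parent_step wu.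
exact/tree_edges_connected/tree_parent_forest.
Qed.

End ParentMap.

Lemma num_spanning_trees_forests : num_spanning_trees e = #|forests_u|.
Proof.
rewrite /num_spanning_trees -(card_in_imset tree_edges_inj).
apply: eq_card => F; rewrite inE; apply/asboolP/imsetP => [[Fsub [Fcon Facyc]] | [p pF ->]].
  by exists (tree_parent Fcon); rewrite ?tree_parent_forest ?tree_edges_parent.
split; first exact: tree_edges_sub.
by split; [apply: tree_edges_connected | apply: tree_edges_acyclic].
Qed.

End SpanningTrees.

Lemma universalP (T : finType) (e : rel T) v :
  reflect (forall w, w != v -> e v w) (universal e v).
Proof. by apply: (iffP forallP) => h w; [apply/implyP | apply/implyP/h]. Qed.

Theorem lemma3p2 (T : finType) (e : rel T) (m : nat) :
  symmetric e -> irreflexive e ->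
  #|[set v | universal e v]| = m ->
  1 <= m < #|T| ->
  #|T| ^ (m - 1) %| num_spanning_trees e.
Proof.
move=> esym eirr card_U /andP [m_gt0 m_lt_n].
set U := [set v | universal e v] in card_U.
have [u uU] : exists u, u \in U by apply/set0Pn; rewrite -card_gt0 card_U.
have u_univ : forall w, w != u -> e u w by apply/universalP; rewrite inE in uU.
have card_S : #|U :\ u| = m - 1 by rewrite -card_U (cardsD1 u U) uU add1n subn1.
have S_proper : U :\ u \proper [set~ u].
  rewrite properEcard cardsC1 card_S -subn1 ltn_sub2rE // m_lt_n andbT.
  by apply/subsetP => x; rewrite !inE => /andP [].
have S_univ : {in U :\ u, forall v, {in [set~ u], forall w, w != v -> e v w}}.
  by move=> v /setD1P [_]; rewrite inE => /universalP v_univ w _; apply: v_univ.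
have dDC : [disjoint [set~ u] & [set u]] by rewrite disjoint_sym disjoints1 !inE eqxx.
have := dvdn_card_forests_universal esym dDC S_proper S_univ.
rewrite (num_spanning_trees_forests esym eirr u_univ) cards1 mul1n cardsC1 add1n.
by rewrite prednK ?card_S // (leq_ltn_trans _ m_lt_n).
Qed.
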